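(* Let $\delta > 0$ and $P > 0$, and let $\mathcal{X}$ be a $\delta$-spaced set of real numbers contained in $[-P, P]$. Let $I$ be a finite set, $\{y_i\}_{i \in I}$ a family of integers and $\{a_i\}_{i \in I}$ a family of complex numbers, and let $T \geq 0$ be a real number with $|y_i| \leq T$ for all $i \in I$. Put $f(t) = \sum_{i \in I} a_i e(t y_i)$ and $f^*(t) = \sum_{i \in I} |a_i| e(t y_i)$. Then \[ \Big| \sum_{x \in \mathcal{X}} f(x) \Big| \leq \pi \left( \mathrm{Card}(\mathcal{X})\, T + \frac{\mathrm{Card}(\mathcal{X})}{\delta} \right)^{1/2} (P+2)^{1/2} \left( \int_0^1 |f^*(t)|^2 \, dt \right)^{1/2}. \]
   Context: $e(z) = e^{2\pi i z}$. For $\delta > 0$, a $\delta$-spaced set of real numbers is a finite set $\mathcal{X}$ of distinct real numbers containing at least two elements such that $|x - x'| \geq \delta$ whenever $x, x'$ are distinct elements of $\mathcal{X}$. *)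

From Stdlib Require Import Reals Lra Lia ZArith List.
Import ListNotations.
Open Scope R_scope.

(* Complex numbers as (real part, imaginary part). *)
Definition Cx : Type := (R * R)%type.
Definition C0 : Cx := (0, 0).
Definition RtoC (r : R) : Cx := (r, 0).
Definition Cplus (z w : Cx) : Cx := (fst z + fst w, snd z + snd w).
Definition Cmult (z w : Cx) : Cx :=
  (fst z * fst w - snd z * snd w, fst z * snd w + snd z * fst w).
Definition Cmod (z : Cx) : R := sqrt (fst z ^ 2 + snd z ^ 2).

Fixpoint Csum_nat (n : nat) (F : nat -> Cx) : Cx :=
  match n with
  | O => C0
  | S m => Cplus (Csum_nat m F) (F m)
  end.
Fixpoint Csum_list (l : list R) (F : R -> Cx) : Cx :=
  match l with
  | [] => C0
  | x :: l' => Cplus (F x) (Csum_list l' F)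
  end.

Definition e (z : R) : Cx := (cos (2 * PI * z), sin (2 * PI * z)).

(* The finite index set I is {0, ..., n-1}. *)
Definition fsum (n : nat) (a : nat -> Cx) (y : nat -> Z) (t : R) : Cx :=
  Csum_nat n (fun i => Cmult (a i) (e (t * IZR (y i)))).
Definition fstar (n : nat) (a : nat -> Cx) (y : nat -> Z) (t : R) : Cx :=
  Csum_nat n (fun i => Cmult (RtoC (Cmod (a i))) (e (t * IZR (y i)))).

Definition delta_spaced (delta : R) (X : list R) : Prop :=
  NoDup X /\ (2 <= length X)%nat /\
  (forall x x', In x X -> In x' X -> x <> x' -> delta <= Rabs (x - x')).

From Stdlib Require Import Reals ZArith List Lra Lia Psatz.
From Stdlib Require Import Classical FunctionalExtensionality Machin.
Import ListNotations.
Open Scope R_scope.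

(** Writing [sum_x f(x) = sum_i a_i S_X(y_i)] with [S_X(k) = sum_x e(k x)] and
    grouping the [|a_i|] by frequency, a weighted Cauchy–Schwarz inequality
    with the Fejér weights [N + 1 - |k|] gives (Section [LargeSieve])
      [|sum_x f(x)|^2 <= int_0^1 |f^*|^2 / (N + 1 - K) * sum_{x, x'} F_N(2 pi (x - x'))],
    where [K >= max |y_i|], [F_N] is the Fejér kernel and Parseval's identity
    identifies the sum of the squared frequency masses with [int_0^1 |f^*|^2].
    The double Fejér sum is bounded using the spacing of [X]: within a unit
    window around an integer, the [j]-th point away from it sees
    [F_N <= 2 / (1 - cos) = O(1 / (j delta)^2)] (Section [Separated]).
    Choosing [N + 1 - K ~ K + 3 / (2 delta)] and taking square roots yields
    the theorem. *)

Fixpoint rsum (n : nat) (f : nat -> R) : R :=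
  match n with O => 0 | S m => rsum m f + f m end.

Fixpoint lsum (l : list R) (f : R -> R) : R :=
  match l with [] => 0 | x :: l' => f x + lsum l' f end.

Lemma rsum_S n f : rsum (S n) f = rsum n f + f n.
Proof. reflexivity. Qed.

Lemma rsum_ext n f g :
  (forall i, (i < n)%nat -> f i = g i) -> rsum n f = rsum n g.
Proof.
  induction n as [|n IH]; intros Hfg; simpl; auto.
  rewrite IH, Hfg; auto; intros; apply Hfg; lia.
Qed.

Lemma rsum_plus n f g : rsum n (fun i => f i + g i) = rsum n f + rsum n g.
Proof. induction n; simpl; try rewrite IHn; ring. Qed.

Lemma rsum_minus n f g : rsum n (fun i => f i - g i) = rsum n f - rsum n g.
Proof. induction n; simpl; try rewrite IHn; ring. Qed.

Lemma rsum_scal n c f : rsum n (fun i => c * f i) = c * rsum n f.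
Proof. induction n; simpl; try rewrite IHn; ring. Qed.

Lemma rsum_scal_r n c f : rsum n (fun i => f i * c) = rsum n f * c.
Proof. induction n; simpl; try rewrite IHn; ring. Qed.

Lemma rsum_const n c : rsum n (fun _ => c) = INR n * c.
Proof. induction n; simpl rsum; [simpl; ring|]. rewrite IHn, S_INR; ring. Qed.

Lemma rsum_le n f g :
  (forall i, (i < n)%nat -> f i <= g i) -> rsum n f <= rsum n g.
Proof.
  induction n as [|n IH]; intros Hfg; simpl; [lra|].
  apply Rplus_le_compat; [apply IH; intros|]; apply Hfg; lia.
Qed.

Lemma rsum_nonneg n f : (forall i, (i < n)%nat -> 0 <= f i) -> 0 <= rsum n f.
Proof.
  intros Hf. rewrite <- (Rmult_0_r (INR n)), <- rsum_const. now apply rsum_le.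
Qed.

Lemma rsum_shift n f : rsum (S n) f = f O + rsum n (fun i => f (S i)).
Proof. induction n; simpl in *; [ring|]. rewrite IHn; ring. Qed.

Lemma rsum_swap n m (f : nat -> nat -> R) :
  rsum n (fun i => rsum m (fun j => f i j)) = rsum m (fun j => rsum n (fun i => f i j)).
Proof.
  induction n; simpl.
  - induction m; simpl; auto. rewrite <- IHm; ring.
  - rewrite IHn, <- rsum_plus; auto.
Qed.

Lemma rsum_single n j0 f : (j0 < n)%nat ->
  (forall j, (j < n)%nat -> j <> j0 -> f j = 0) -> rsum n f = f j0.
Proof.
  induction n as [|n IH]; intros Hj0 Hf; [lia|]. simpl.
  destruct (Nat.eq_dec j0 n) as [->|Hne].
  - rewrite (rsum_ext n f (fun _ => 0)), rsum_const by (intros; apply Hf; lia). ring.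
  - rewrite IH, (Hf n) by (lia || (intros; apply Hf; lia)). ring.
Qed.

Lemma rsum_sq n f :
  rsum n f * rsum n f = rsum n (fun i => rsum n (fun j => f i * f j)).
Proof. rewrite <- rsum_scal_r. apply rsum_ext; intros. now rewrite <- rsum_scal. Qed.

Lemma lsum_ext l f g : (forall x, In x l -> f x = g x) -> lsum l f = lsum l g.
Proof. induction l; simpl; intros Hfg; auto. rewrite Hfg, IHl; auto. Qed.

Lemma lsum_plus l f g : lsum l (fun x => f x + g x) = lsum l f + lsum l g.
Proof. induction l; simpl; try rewrite IHl; ring. Qed.

Lemma lsum_minus l f g : lsum l (fun x => f x - g x) = lsum l f - lsum l g.
Proof. induction l; simpl; try rewrite IHl; ring. Qed.

Lemma lsum_scal l c f : lsum l (fun x => c * f x) = c * lsum l f.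
Proof. induction l; simpl; try rewrite IHl; ring. Qed.

Lemma lsum_scal_r l c f : lsum l (fun x => f x * c) = lsum l f * c.
Proof. induction l; simpl; try rewrite IHl; ring. Qed.

Lemma lsum_const l c : lsum l (fun _ => c) = INR (length l) * c.
Proof.
  induction l; simpl lsum; [simpl; ring|].
  rewrite IHl; simpl length; rewrite S_INR; ring.
Qed.

Lemma lsum_le l f g : (forall x, In x l -> f x <= g x) -> lsum l f <= lsum l g.
Proof. induction l; simpl; intros Hfg; try lra. apply Rplus_le_compat; auto. Qed.

Lemma lsum_app l1 l2 f : lsum (l1 ++ l2) f = lsum l1 f + lsum l2 f.
Proof. induction l1; simpl; try rewrite IHl1; ring. Qed.

Lemma lsum_map l f g : lsum (map g l) f = lsum l (fun x => f (g x)).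
Proof. induction l; simpl; auto. rewrite IHl; auto. Qed.

Lemma lsum_filter l f (p : R -> bool) :
  lsum l f = lsum (filter p l) f + lsum (filter (fun x => negb (p x)) l) f.
Proof. induction l; simpl; [ring|]. destruct (p a); simpl; rewrite IHl; ring. Qed.

Lemma lsum_rsum_swap l n (f : R -> nat -> R) :
  lsum l (fun x => rsum n (fun i => f x i)) = rsum n (fun i => lsum l (fun x => f x i)).
Proof.
  induction l; simpl.
  - induction n; simpl; auto. rewrite <- IHn; ring.
  - rewrite IHl, <- rsum_plus; auto.
Qed.

Lemma lsum_sq l f :
  lsum l f * lsum l f = lsum l (fun x => lsum l (fun x' => f x * f x')).
Proof. rewrite <- lsum_scal_r. apply lsum_ext; intros. now rewrite <- lsum_scal. Qed.

(** Cauchy–Schwarz inequality for finite sums, proved by induction on the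
    number of terms: the new cross term [2 A x y] is controlled by
    [B y^2 + C x^2] via the AM–GM inequality and the induction hypothesis
    [A^2 <= B C]. *)
Lemma rsum_cauchy_schwarz n u v :
  rsum n (fun i => u i * v i) ^ 2 <=
  rsum n (fun i => u i ^ 2) * rsum n (fun i => v i ^ 2).
Proof.
  induction n as [|n IH]; rewrite ?rsum_S; [simpl; lra|].
  set (A := rsum n (fun i => u i * v i)) in *.
  set (B := rsum n (fun i => u i ^ 2)) in *.
  set (C := rsum n (fun i => v i ^ 2)) in *.
  set (x := u n); set (y := v n).
  assert (HB : 0 <= B) by (apply rsum_nonneg; intros; nra).
  assert (HC : 0 <= C) by (apply rsum_nonneg; intros; nra).
  assert (Hsq : (2 * A * x * y) ^ 2 <= (B * y ^ 2 + C * x ^ 2) ^ 2).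
  { assert (0 <= (B * y ^ 2 - C * x ^ 2) ^ 2) by apply pow2_ge_0.
    assert (A ^ 2 * (x ^ 2 * y ^ 2) <= B * C * (x ^ 2 * y ^ 2))
      by (apply Rmult_le_compat_r; [nra | exact IH]).
    nra. }
  assert (Hcross : 2 * A * x * y <= B * y ^ 2 + C * x ^ 2).
  { assert (Habs := Rsqr_le_abs_0 (2 * A * x * y) (B * y ^ 2 + C * x ^ 2)).
    rewrite !Rsqr_pow2, (Rabs_pos_eq (B * y ^ 2 + C * x ^ 2)) in Habs by nra.
    pose proof (Rle_abs (2 * A * x * y)). specialize (Habs Hsq). lra. }
  nra.
Qed.

Lemma rsum_weighted_cauchy_schwarz n u v w :
  (forall j, (j < n)%nat -> 0 < w j) ->
  rsum n (fun j => u j * v j) ^ 2 <=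
  rsum n (fun j => u j ^ 2 / w j) * rsum n (fun j => w j * v j ^ 2).
Proof.
  intros Hw.
  replace (rsum n (fun j => u j * v j))
    with (rsum n (fun j => (u j / sqrt (w j)) * (sqrt (w j) * v j))).
  2:{ apply rsum_ext; intros j Hj. specialize (Hw j Hj).
      assert (0 < sqrt (w j)) by (apply sqrt_lt_R0; auto). field. lra. }
  replace (rsum n (fun j => u j ^ 2 / w j))
    with (rsum n (fun j => (u j / sqrt (w j)) ^ 2)).
  2:{ apply rsum_ext; intros j Hj. specialize (Hw j Hj).
      assert (0 < sqrt (w j)) by (apply sqrt_lt_R0; auto).
      unfold Rdiv. rewrite Rpow_mult_distr, pow_inv, pow2_sqrt; lra. }
  replace (rsum n (fun j => w j * v j ^ 2))
    with (rsum n (fun j => (sqrt (w j) * v j) ^ 2)).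
  2:{ apply rsum_ext; intros j Hj. specialize (Hw j Hj).
      rewrite Rpow_mult_distr, pow2_sqrt; lra. }
  apply rsum_cauchy_schwarz.
Qed.

Lemma Cx_eq (z w : Cx) : fst z = fst w -> snd z = snd w -> z = w.
Proof. destruct z, w; simpl; intros; subst; auto. Qed.

Lemma fst_Csum_nat n F : fst (Csum_nat n F) = rsum n (fun i => fst (F i)).
Proof. induction n; simpl; auto. rewrite IHn; auto. Qed.

Lemma snd_Csum_nat n F : snd (Csum_nat n F) = rsum n (fun i => snd (F i)).
Proof. induction n; simpl; auto. rewrite IHn; auto. Qed.

Lemma fst_Csum_list l F : fst (Csum_list l F) = lsum l (fun x => fst (F x)).
Proof. induction l; simpl; auto. rewrite IHl; auto. Qed.

Lemma snd_Csum_list l F : snd (Csum_list l F) = lsum l (fun x => snd (F x)).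
Proof. induction l; simpl; auto. rewrite IHl; auto. Qed.

Lemma Cmod_nonneg z : 0 <= Cmod z.
Proof. apply sqrt_pos. Qed.

Lemma Cmod_sq z : Cmod z ^ 2 = fst z ^ 2 + snd z ^ 2.
Proof. unfold Cmod. apply pow2_sqrt. nra. Qed.

Lemma Cmod_mult z w : Cmod (Cmult z w) = Cmod z * Cmod w.
Proof. unfold Cmod. rewrite <- sqrt_mult by nra. f_equal. unfold Cmult; simpl. ring. Qed.

(** The triangle inequality; the key step is the Cauchy–Schwarz bound
    [a c + b d <= |z| |w|] for the real inner product of [z] and [w]. *)
Lemma Cmod_triangle z w : Cmod (Cplus z w) <= Cmod z + Cmod w.
Proof.
  destruct z as [a b], w as [c d]. unfold Cmod, Cplus; cbn [fst snd].
  set (p := sqrt (a ^ 2 + b ^ 2)). set (q := sqrt (c ^ 2 + d ^ 2)).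
  assert (Hp : 0 <= p) by apply sqrt_pos. assert (Hq : 0 <= q) by apply sqrt_pos.
  assert (Hp2 : p * p = a ^ 2 + b ^ 2) by (apply sqrt_sqrt; nra).
  assert (Hq2 : q * q = c ^ 2 + d ^ 2) by (apply sqrt_sqrt; nra).
  assert (Hinner : a * c + b * d <= p * q).
  { unfold p, q. rewrite <- sqrt_mult by nra.
    apply Rle_trans with (Rabs (a * c + b * d)); [apply Rle_abs|].
    rewrite <- sqrt_Rsqr_abs. apply sqrt_le_1_alt. unfold Rsqr.
    assert (0 <= (a * d - b * c) ^ 2) by apply pow2_ge_0. nra. }
  rewrite <- (sqrt_pow2 (p + q)) by lra. apply sqrt_le_1_alt. nra.
Qed.

Lemma Cmod_Csum_nat n G : Cmod (Csum_nat n G) <= rsum n (fun i => Cmod (G i)).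
Proof.
  induction n; simpl.
  - unfold Cmod, C0; simpl. replace (0 * (0 * 1) + 0 * (0 * 1)) with 0 by ring.
    rewrite sqrt_0; lra.
  - eapply Rle_trans; [apply Cmod_triangle|]. lra.
Qed.

Definition expsum (X : list R) (k : Z) : Cx := Csum_list X (fun x => e (x * IZR k)).

(** Exchanging the two sums: [sum_x f(x) = sum_i a_i S_X(y_i)], hence
    [|sum_x f(x)| <= sum_i |a_i| |S_X(y_i)|]. *)
Lemma Cmod_sum_trig_poly_le X n a y :
  Cmod (Csum_list X (fsum n a y)) <= rsum n (fun i => Cmod (a i) * Cmod (expsum X (y i))).
Proof.
  assert (Hswap : Csum_list X (fsum n a y) = Csum_nat n (fun i => Cmult (a i) (expsum X (y i)))).
  { unfold fsum, expsum, Cmult. apply Cx_eq.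
    - rewrite fst_Csum_list, fst_Csum_nat.
      rewrite (lsum_ext _ _ (fun x => rsum n (fun i => fst (Cmult (a i) (e (x * IZR (y i)))))))
        by (intros; apply fst_Csum_nat).
      rewrite lsum_rsum_swap. apply rsum_ext; intros. simpl.
      rewrite fst_Csum_list, snd_Csum_list, <- !lsum_scal, <- lsum_minus.
      apply lsum_ext; intros. reflexivity.
    - rewrite snd_Csum_list, snd_Csum_nat.
      rewrite (lsum_ext _ _ (fun x => rsum n (fun i => snd (Cmult (a i) (e (x * IZR (y i)))))))
        by (intros; apply snd_Csum_nat).
      rewrite lsum_rsum_swap. apply rsum_ext; intros. simpl.
      rewrite fst_Csum_list, snd_Csum_list, <- !lsum_scal, <- lsum_plus.
      apply lsum_ext; intros. reflexivity. }
  rewrite Hswap. eapply Rle_trans; [apply Cmod_Csum_nat|].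
  right. apply rsum_ext; intros. apply Cmod_mult.
Qed.

Lemma Cmod_expsum_sq X k :
  Cmod (expsum X k) ^ 2 = lsum X (fun x => lsum X (fun x' => cos (IZR k * (2 * PI * (x - x'))))).
Proof.
  rewrite Cmod_sq. unfold expsum. rewrite fst_Csum_list, snd_Csum_list. cbn [fst snd e].
  rewrite <- !Rsqr_pow2. unfold Rsqr. rewrite !lsum_sq, <- lsum_plus.
  apply lsum_ext; intros. rewrite <- lsum_plus. apply lsum_ext; intros.
  rewrite <- cos_minus. f_equal. ring.
Qed.

(** The Dirichlet kernel [D_M(t) = sum_{|k| <= M} cos(k t)] and the Fejér
    kernel [F_N(t) = sum_{|k| <= N} (N + 1 - |k|) cos(k t)], written with
    the positive frequencies only. *)
Definition dirichlet (M : nat) (t : R) : R := 1 + 2 * rsum M (fun k => cos (INR (S k) * t)).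

Definition fejer (N : nat) (t : R) : R :=
  INR (S N) + 2 * rsum N (fun k => (INR N - INR k) * cos (INR (S k) * t)).

Lemma dirichlet_mul_one_minus_cos M t :
  dirichlet M t * (2 - 2 * cos t) = 2 * cos (INR M * t) - 2 * cos (INR (S M) * t).
Proof.
  unfold dirichlet. induction M as [|M IH].
  - simpl. rewrite Rmult_0_l, Rmult_1_l, cos_0. ring.
  - rewrite rsum_S.
    replace ((1 + 2 * (rsum M (fun k => cos (INR (S k) * t)) + cos (INR (S M) * t))) * (2 - 2 * cos t))
      with ((1 + 2 * rsum M (fun k => cos (INR (S k) * t))) * (2 - 2 * cos t)
            + 4 * cos (INR (S M) * t) - 2 * (cos (INR (S M) * t + t) + cos (INR (S M) * t - t)))
      by (rewrite cos_plus, cos_minus; ring).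
    rewrite IH.
    replace (INR (S M) * t + t) with (INR (S (S M)) * t) by (rewrite !S_INR; ring).
    replace (INR (S M) * t - t) with (INR M * t) by (rewrite !S_INR; ring). ring.
Qed.

Lemma dirichlet_le M t : dirichlet M t <= 2 * INR M + 1.
Proof.
  unfold dirichlet.
  assert (Hcos : rsum M (fun k => cos (INR (S k) * t)) <= rsum M (fun _ => 1))
    by (apply rsum_le; intros; apply COS_bound).
  rewrite rsum_const in Hcos. lra.
Qed.

Lemma fejer_S N t : fejer (S N) t = fejer N t + dirichlet (S N) t.
Proof.
  unfold fejer, dirichlet. rewrite !rsum_S.
  rewrite (rsum_ext N (fun k => (INR (S N) - INR k) * cos (INR (S k) * t))
     (fun k => (INR N - INR k) * cos (INR (S k) * t) + cos (INR (S k) * t)))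
    by (intros; rewrite S_INR; ring).
  rewrite rsum_plus, !S_INR. ring.
Qed.

Lemma fejer_mul_one_minus_cos N t : fejer N t * (2 - 2 * cos t) = 2 - 2 * cos (INR (S N) * t).
Proof.
  induction N as [|N IH].
  - unfold fejer; simpl. rewrite Rmult_1_l. ring.
  - rewrite fejer_S, Rmult_plus_distr_r, IH, dirichlet_mul_one_minus_cos. ring.
Qed.

Lemma fejer_le_sq N t : fejer N t <= INR (S N) ^ 2.
Proof.
  induction N as [|N IH].
  - unfold fejer; simpl. lra.
  - rewrite fejer_S. assert (h := dirichlet_le (S N) t). rewrite !S_INR in *. nra.
Qed.

Lemma fejer_mul_one_minus_cos_le N t : fejer N t * (1 - cos t) <= 2.
Proof.
  assert (h := fejer_mul_one_minus_cos N t).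
  assert (h2 := COS_bound (INR (S N) * t)). lra.
Qed.

(** Reindexing a sum over [-N..N] (stored as [0..2N]) by folding [k] and [-k]. *)
Lemma rsum_symmetric N g : rsum (2 * N + 1) (fun j => g (INR j - INR N)) =
  g 0 + rsum N (fun k => g (INR (S k)) + g (- INR (S k))).
Proof.
  induction N as [|N IH].
  - simpl. rewrite Rminus_0_r. ring.
  - replace (2 * S N + 1)%nat with (S (S (2 * N + 1))) by lia.
    rewrite rsum_shift, rsum_S.
    rewrite (rsum_ext (2 * N + 1) (fun i => g (INR (S i) - INR (S N))) (fun j => g (INR j - INR N)))
      by (intros; f_equal; rewrite !S_INR; ring).
    rewrite IH, rsum_S.
    replace (INR 0 - INR (S N)) with (- INR (S N)) by (simpl; ring).
    replace (INR (S (2 * N + 1)) - INR (S N)) with (INR (S N))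
      by (rewrite !S_INR, plus_INR, mult_INR; simpl; ring).
    ring.
Qed.

Lemma fejer_symmetric N t : fejer N t =
  rsum (2 * N + 1) (fun j => (INR (S N) - Rabs (INR j - INR N)) * cos ((INR j - INR N) * t)).
Proof.
  rewrite (rsum_symmetric N (fun u => (INR (S N) - Rabs u) * cos (u * t))).
  unfold fejer. rewrite Rabs_R0, Rmult_0_l, cos_0, <- rsum_scal.
  f_equal; [ring|]. apply rsum_ext; intros k _.
  rewrite Rabs_Ropp, Rabs_pos_eq by apply pos_INR.
  replace (- INR (S k) * t) with (- (INR (S k) * t)) by ring.
  rewrite cos_neg, !S_INR. ring.
Qed.

Lemma fejer_weighted_expsum X N :
  rsum (2 * N + 1) (fun j => (INR (S N) - Rabs (INR j - INR N))
                             * Cmod (expsum X (Z.of_nat j - Z.of_nat N)) ^ 2)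
  = lsum X (fun x => lsum X (fun x' => fejer N (2 * PI * (x - x')))).
Proof.
  rewrite (rsum_ext _ _ (fun j => lsum X (fun x => lsum X (fun x' =>
     (INR (S N) - Rabs (INR j - INR N)) * cos ((INR j - INR N) * (2 * PI * (x - x'))))))).
  2:{ intros. rewrite Cmod_expsum_sq, <- lsum_scal. apply lsum_ext; intros.
      rewrite <- lsum_scal. apply lsum_ext; intros.
      rewrite minus_IZR, <- !INR_IZR_INZ. reflexivity. }
  rewrite <- lsum_rsum_swap. apply lsum_ext; intros.
  rewrite <- lsum_rsum_swap. apply lsum_ext; intros.
  symmetry. apply fejer_symmetric.
Qed.

Lemma PI_bounds : 3.1415 <= PI <= 3.1421.
Proof.
  destruct (PI_2_3_7_ineq 1) as [H1 H2].
  unfold tg_alt, PI_2_3_7_tg, Ratan_seq in *. simpl in *. lra.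
Qed.

Lemma sin_ge_cubic x : 0 <= x -> x <= PI -> x - x ^ 3 / 6 <= sin x.
Proof.
  intros Hx0 HxPI. destruct (SIN x Hx0 HxPI) as [Hlb _]. eapply Rle_trans; [|exact Hlb].
  unfold sin_lb, sin_approx, sin_term. simpl. pose proof PI_bounds.
  assert (x * x <= 16) by nra. assert (0 <= x ^ 5) by (apply pow_le; auto).
  assert (x ^ 7 = x ^ 5 * (x * x)) by ring.
  replace (INR (fact 7)) with 5040 by (simpl; lra). replace (INR (fact 5)) with 120 by (simpl; lra).
  replace (INR (fact 3)) with 6 by (simpl; lra). replace (INR (fact 1)) with 1 by (simpl; lra).
  nra.
Qed.

Lemma cos_shift_int t z : cos (t + 2 * PI * IZR z) = cos t.
Proof.
  assert (Hsin : sin (2 * PI * IZR z) = 0).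
  { apply sin_eq_0_1. exists (2 * z)%Z. rewrite mult_IZR; simpl; ring. }
  assert (Hcos : cos (2 * PI * IZR z) = 1).
  { replace (2 * PI * IZR z) with (2 * (IZR z * PI)) by ring.
    rewrite cos_2a_sin, sin_eq_0_1 by (exists z; auto). ring. }
  rewrite cos_plus, Hsin, Hcos. ring.
Qed.

(** Quadratic lower bound [1 - cos(2 pi u) >= 6.8 u^2] for [|u| <= 1/2]:
    write [1 - cos(2 pi u) = 2 sin(pi u)^2] and use [sin v >= 0.588 v] for
    [0 <= v <= pi/2], which follows from the cubic Taylor bound. *)
Lemma one_minus_cos_ge_sq u : Rabs u <= /2 -> (68 / 10) * u ^ 2 <= 1 - cos (2 * PI * u).
Proof.
  intros Hu. replace (2 * PI * u) with (2 * (PI * u)) by ring. rewrite cos_2a_sin.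
  pose proof PI_bounds as HPI.
  assert (Hhalf : forall v, 0 <= v <= /2 -> (68 / 10) * v ^ 2 <= 2 * (sin (PI * v) * sin (PI * v))).
  { intros v Hv.
    assert (Hcubic : PI * v - (PI * v) ^ 3 / 6 <= sin (PI * v)) by (apply sin_ge_cubic; nra).
    assert (Hlin : (588 / 1000) * PI * v <= PI * v - (PI * v) ^ 3 / 6).
    { assert (0 <= PI * v <= 1.5711) by (split; nra).
      assert ((PI * v) ^ 2 <= 2.47) by nra.
      replace ((PI * v) ^ 3) with ((PI * v) ^ 2 * (PI * v)) by ring. nra. }
    assert (0 <= (588 / 1000) * PI * v) by nra.
    assert (Hsq : ((588 / 1000) * PI * v) ^ 2 <= sin (PI * v) * sin (PI * v)) by nra.
    assert (PI ^ 2 >= 9.869) by nra.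
    replace (((588 / 1000) * PI * v) ^ 2) with ((345744 / 1000000) * PI ^ 2 * v ^ 2) in Hsq by field.
    nra. }
  destruct (Rle_dec 0 u) as [Hpos|Hneg].
  - rewrite Rabs_pos_eq in Hu by auto. specialize (Hhalf u (conj Hpos Hu)). lra.
  - apply Rnot_le_lt in Hneg. rewrite Rabs_left in Hu by lra. 
    assert (Hnu : 0 <= - u <= /2) by lra. specialize (Hhalf (- u) Hnu).
    replace (PI * - u) with (- (PI * u)) in Hhalf by ring. rewrite sin_neg in Hhalf.
    replace ((- u) ^ 2) with (u ^ 2) in Hhalf by ring. lra.
Qed.

(** [sum_{j=1}^{n+1} 1/j^2 <= 2 - 1/(n+1)], by telescoping [1/j^2 <= 1/(j-1) - 1/j]. *)
Lemma inv_sq_sum_le n : rsum (S n) (fun j => / INR (S j) ^ 2) <= 2 - / INR (S n).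
Proof.
  induction n as [|n IH].
  - simpl. lra.
  - rewrite rsum_S. set (m := INR (S n)) in *.
    assert (Hm : 1 <= m) by (unfold m; rewrite S_INR; pose proof (pos_INR n); lra).
    replace (INR (S (S n))) with (m + 1) by (unfold m; rewrite (S_INR (S n)); ring).
    assert (/ (m + 1) ^ 2 <= / m - / (m + 1)).
    { replace (/ m - / (m + 1)) with (/ (m * (m + 1))) by (field; lra).
      apply Rinv_le_contravar; nra. }
    lra.
Qed.

Lemma inv_sq_sum_le_2 n : rsum n (fun j => / INR (S j) ^ 2) <= 2.
Proof.
  destruct n as [|n]; [cbn [rsum]; lra|].
  pose proof (inv_sq_sum_le n).
  assert (0 < / INR (S n)) by (apply Rinv_0_lt_compat, lt_0_INR; lia). lra.
Qed.

(** Majorant of the Fejér kernel [F_N(2 pi d)] at a point [d] whose distance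
    to the nearest integer is at least [j delta / 2]: the trivial bound
    [(N+1)^2] for [j = 0], and [2 / (1 - cos) <= 8 / (6.8 delta^2 j^2)] otherwise. *)
Definition fejer_majorant (N : nat) (delta : R) (j : nat) : R :=
  match j with
  | O => INR (S N) ^ 2
  | S j' => 8 / ((68 / 10) * delta ^ 2) * / INR (S j') ^ 2
  end.

Lemma fejer_le_majorant N delta (z : Z) d j : 0 < delta ->
  Rabs (d - IZR z) <= /2 -> INR j * delta / 2 <= Rabs (d - IZR z) ->
  fejer N (2 * PI * d) <= fejer_majorant N delta j.
Proof.
  intros Hd Hnear Hfar. destruct j as [|j]; [apply fejer_le_sq|].
  cbn [fejer_majorant]. set (u := d - IZR z) in *.
  assert (Hcos : cos (2 * PI * d) = cos (2 * PI * u)).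
  { unfold u. rewrite <- (cos_shift_int (2 * PI * (d - IZR z)) z). f_equal. ring. }
  assert (H1 := one_minus_cos_ge_sq u Hnear).
  assert (H2 := fejer_mul_one_minus_cos_le N (2 * PI * d)). rewrite Hcos in H2.
  assert (Hj : 0 < INR (S j)) by (apply lt_0_INR; lia).
  set (r := INR (S j) * delta / 2) in *.
  assert (Hr : 0 < r) by (unfold r; nra).
  assert (Hru : r ^ 2 <= u ^ 2).
  { rewrite <- (Rsqr_pow2 u), Rsqr_abs, Rsqr_pow2. nra. }
  set (F := fejer N (2 * PI * d)) in *.
  assert (HF : F * ((68 / 10) * r ^ 2) <= 2).
  { destruct (Rle_dec F 0); [nra|].
    assert ((68 / 10) * r ^ 2 <= 1 - cos (2 * PI * u)) by nra. nra. }
  replace (8 / ((68 / 10) * delta ^ 2) * / INR (S j) ^ 2) with (2 / ((68 / 10) * r ^ 2))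
    by (unfold r; field; lra).
  apply (Rmult_le_reg_r ((68 / 10) * r ^ 2)); [nra|].
  replace (2 / ((68 / 10) * r ^ 2) * ((68 / 10) * r ^ 2)) with 2 by (field; lra). lra.
Qed.

Lemma fejer_majorant_sum N delta n : 0 < delta ->
  rsum n (fejer_majorant N delta) <= INR (S N) ^ 2 + 16 / ((68 / 10) * delta ^ 2).
Proof.
  intros Hd.
  assert (Hc : 0 < 8 / ((68 / 10) * delta ^ 2))
    by (apply Rdiv_lt_0_compat; [lra | apply Rmult_lt_0_compat; [lra | apply pow_lt; lra]]).
  assert (0 <= INR (S N) ^ 2) by apply pow2_ge_0.
  destruct n as [|n]; [cbn [rsum]; lra|].
  rewrite rsum_shift. cbn [fejer_majorant]. rewrite rsum_scal.
  assert (h := inv_sq_sum_le_2 n).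
  assert (8 / ((68 / 10) * delta ^ 2) * rsum n (fun j => / INR (S j) ^ 2)
          <= 8 / ((68 / 10) * delta ^ 2) * 2) by (apply Rmult_le_compat_l; lra).
  replace (16 / ((68 / 10) * delta ^ 2)) with (8 / ((68 / 10) * delta ^ 2) * 2) by (field; lra).
  lra.
Qed.

(** [separated delta l]: the entries of [l] are distinct and pairwise at
    distance at least [delta] ([delta_spaced] without the size condition,
    which is not stable under taking sublists). *)
Definition separated (delta : R) (l : list R) : Prop :=
  NoDup l /\ (forall x x', In x l -> In x' l -> x <> x' -> delta <= Rabs (x - x')).

Lemma exists_max (f : R -> R) l : l <> [] -> exists x, In x l /\ forall y, In y l -> f y <= f x.
Proof.
  induction l as [|a l IH]; intros Hne; [congruence|].
  destruct l as [|b l'].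
  - exists a; split; [left; auto|]. intros y [<-|[]]; lra.
  - destruct IH as [x [Hx Hmax]]; [discriminate|].
    destruct (Rle_dec (f a) (f x)).
    + exists x; split; [right; auto|]. intros y [<-|Hy]; auto.
    + exists a; split; [left; auto|]. intros y [<-|Hy]; [lra|]. specialize (Hmax y Hy); lra.
Qed.

Lemma in_app_cons_of_in_app (l1 : list R) x l2 y : In y (l1 ++ l2) -> In y (l1 ++ x :: l2).
Proof. rewrite !in_app_iff. simpl. tauto. Qed.

Lemma lsum_app_cons l1 x l2 f : lsum (l1 ++ x :: l2) f = f x + lsum (l1 ++ l2) f.
Proof. rewrite !lsum_app. simpl. ring. Qed.

Lemma separated_remove delta l1 x l2 :
  separated delta (l1 ++ x :: l2) -> separated delta (l1 ++ l2).
Proof.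
  intros [Hnd Hsep]. split; [eapply NoDup_remove_1; eauto|].
  intros; apply Hsep; auto; apply in_app_cons_of_in_app; auto.
Qed.

Lemma separated_remove_ne delta l1 x l2 y :
  separated delta (l1 ++ x :: l2) -> In y (l1 ++ l2) -> y <> x.
Proof. intros [Hnd _] Hy ->. exact (NoDup_remove_2 _ _ _ Hnd Hy). Qed.

Lemma separated_filter delta l (p : R -> bool) :
  separated delta l -> separated delta (filter p l).
Proof.
  intros [Hnd Hsep]. split; [apply NoDup_filter; auto|].
  intros x x' Hx Hx'. apply filter_In in Hx, Hx'. apply Hsep; tauto.
Qed.

Lemma separated_reflect delta x l :
  separated delta l -> separated delta (map (fun x' => x - x') l).
Proof.
  intros [Hnd Hsep]. split.
  - apply NoDup_map_NoDup_ForallPairs; auto. intros u v _ _ Huv; lra.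
  - intros u v Hu Hv Huv.
    apply in_map_iff in Hu as [u' [<- Hu']]. apply in_map_iff in Hv as [v' [<- Hv']].
    replace (x - u' - (x - v')) with (- (u' - v')) by ring. rewrite Rabs_Ropp.
    apply Hsep; auto. intros ->; auto.
Qed.

Section Separated.
Variable delta : R.
Hypothesis Hdelta : 0 < delta.

(** Packing bound: [n + 1] separated points in [[a, b]] force [n delta <= b - a].
    Remove the largest point [x]; the others lie in [[a, x - delta]]. *)
Lemma separated_length_le : forall n l a b, length l = S n -> separated delta l ->
  (forall x, In x l -> a <= x <= b) -> INR n * delta <= b - a.
Proof.
  induction n as [|n IH]; intros l a b Hlen Hsep Hin.
  - destruct l as [|x l]; [discriminate|]. specialize (Hin x (or_introl eq_refl)). simpl. lra.
  - destruct (exists_max (fun t => t) l) as [x [Hx Hmax]]; [intros ->; discriminate|].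
    destruct (in_split _ _ Hx) as [l1 [l2 ->]].
    assert (Hlen' : length (l1 ++ l2) = S n) by (rewrite length_app in *; simpl in *; lia).
    assert (Hrest : INR n * delta <= x - delta - a).
    { apply (IH (l1 ++ l2) a (x - delta) Hlen' (separated_remove _ _ _ _ Hsep)).
      intros y Hy. split; [apply Hin, in_app_cons_of_in_app; auto|].
      assert (y <> x) by (eapply separated_remove_ne; eauto).
      assert (y <= x) by (apply Hmax, in_app_cons_of_in_app; auto).
      destruct Hsep as [_ Hsep].
      assert (delta <= Rabs (y - x)) by (apply Hsep; auto; apply in_app_cons_of_in_app; auto).
      rewrite Rabs_left1 in *; lra. }
    assert (x <= b) by (apply Hin; auto). rewrite S_INR. lra.
Qed.

(** Ordering a separated list by distance to a centre [m], the point of rank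
    [j] (counting from [0]) is at distance at least [j delta / 2] from [m],
    because the [j + 1] nearest points fit in an interval of length twice that
    distance. *)
Lemma lsum_le_by_rank (m : R) (phi : R -> R) (B : nat -> R) :
  forall n l, length l = n -> separated delta l ->
  (forall d j, In d l -> INR j * delta / 2 <= Rabs (d - m) -> phi d <= B j) ->
  lsum l phi <= rsum n B.
Proof.
  induction n as [|n IH]; intros l Hlen Hsep Hphi.
  - destruct l; [simpl; lra|discriminate].
  - destruct (exists_max (fun t => Rabs (t - m)) l) as [x [Hx Hmax]]; [intros ->; discriminate|].
    destruct (in_split _ _ Hx) as [l1 [l2 ->]].
    assert (Hlen' : length (l1 ++ l2) = n) by (rewrite length_app in *; simpl in *; lia).
    rewrite lsum_app_cons, rsum_S.
    assert (lsum (l1 ++ l2) phi <= rsum n B).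
    { apply IH; auto; [eapply separated_remove; eauto|].
      intros; apply Hphi; auto; apply in_app_cons_of_in_app; auto. }
    assert (phi x <= B n).
    { apply Hphi; auto.
      assert (INR n * delta <= (m + Rabs (x - m)) - (m - Rabs (x - m))).
      { apply (separated_length_le n (l1 ++ x :: l2)); auto.
        intros y Hy. specialize (Hmax y Hy).
        pose proof (Rle_abs (y - m)). pose proof (Rle_abs (- (y - m))).
        rewrite Rabs_Ropp in *. lra. }
      lra. }
    lra.
Qed.

Lemma lsum_le_unit_windows (m : R) (phi : R -> R) (C : R) :
  (forall t l, separated delta l ->
     (forall d, In d l -> m + INR t - /2 <= d < m + INR t + /2) -> lsum l phi <= C) ->
  forall W t l, separated delta l ->
  (forall d, In d l -> m + INR t - /2 <= d < m + INR t - /2 + INR W) ->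
  lsum l phi <= INR W * C.
Proof.
  intros Hwindow. induction W as [|W IH]; intros t l Hsep Hin.
  - destruct l as [|x l]; [simpl; lra|].
    specialize (Hin x (or_introl eq_refl)). simpl in Hin. lra.
  - set (p := fun d => if Rlt_dec d (m + INR t + /2) then true else false).
    rewrite (lsum_filter l phi p), S_INR.
    assert (lsum (filter p l) phi <= C).
    { apply (Hwindow t); [apply separated_filter; auto|].
      intros d Hd. apply filter_In in Hd as [Hdl Hp].
      unfold p in Hp. destruct Rlt_dec; [|discriminate]. specialize (Hin d Hdl). lra. }
    assert (lsum (filter (fun x => negb (p x)) l) phi <= INR W * C).
    { apply (IH (S t)); [apply separated_filter; auto|].
      intros d Hd. apply filter_In in Hd as [Hdl Hp].
      unfold p in Hp. destruct Rlt_dec; [discriminate|].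
      specialize (Hin d Hdl). rewrite S_INR in *. lra. }
    lra.
Qed.

(** The Fejér kernel summed over a separated set in [[-P, P]], seen from a
    fixed point [x]: cover the differences [x - x'] by [ceil(2P + 1)] unit
    windows centred at integers and bound each window by the summed
    majorants. *)
Lemma fejer_sum_separated_le P N X x : 0 < P -> separated delta X ->
  (forall x', In x' X -> -P <= x' <= P) ->
  lsum X (fun x' => fejer N (2 * PI * (x - x'))) <=
  (2 * P + 2) * (INR (S N) ^ 2 + 16 / ((68 / 10) * delta ^ 2)).
Proof.
  intros HP Hsep HX.
  set (C := INR (S N) ^ 2 + 16 / ((68 / 10) * delta ^ 2)).
  assert (HC : 0 <= C).
  { unfold C. assert (0 <= INR (S N) ^ 2) by apply pow2_ge_0.
    assert (0 < 16 / ((68 / 10) * delta ^ 2))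
      by (apply Rdiv_lt_0_compat; [lra | apply Rmult_lt_0_compat; [lra | apply pow_lt; lra]]).
    lra. }
  rewrite <- (lsum_map X (fun d => fejer N (2 * PI * d)) (fun x' => x - x')).
  set (A := x - P).
  set (z0 := (up (A + /2) - 1)%Z).
  destruct (archimed (A + /2)) as [Hu1 Hu2].
  assert (Hz0 : A - /2 < IZR z0 <= A + /2) by (unfold z0; rewrite minus_IZR; simpl; lra).
  destruct (archimed (2 * P + 1)) as [Hw1 Hw2].
  set (W := Z.to_nat (up (2 * P + 1))).
  assert (HW : INR W = IZR (up (2 * P + 1))).
  { unfold W. rewrite INR_IZR_INZ, Z2Nat.id; auto. apply le_IZR. lra. }
  apply Rle_trans with (INR W * C); [|apply Rmult_le_compat_r; lra].
  apply (lsum_le_unit_windows (IZR z0) _ C) with (t := 0%nat).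
  - intros t l Hl Hin.
    apply Rle_trans with (rsum (length l) (fejer_majorant N delta));
      [|apply fejer_majorant_sum; auto].
    apply (lsum_le_by_rank (IZR (z0 + Z.of_nat t))) with (n := length l); auto.
    intros d j Hdl Hj. apply fejer_le_majorant with (z := (z0 + Z.of_nat t)%Z); auto.
    specialize (Hin d Hdl). rewrite plus_IZR, <- INR_IZR_INZ. apply Rabs_le. lra.
  - apply separated_reflect; auto.
  - intros d Hdl. apply in_map_iff in Hdl as [x' [<- Hx']]. specialize (HX x' Hx').
    simpl INR. rewrite HW. unfold A in *. lra.
Qed.

Lemma fejer_double_sum_le P N X : 0 < P -> separated delta X ->
  (forall x', In x' X -> -P <= x' <= P) ->
  lsum X (fun x => lsum X (fun x' => fejer N (2 * PI * (x - x')))) <=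
  INR (length X) * ((2 * P + 2) * (INR (S N) ^ 2 + 16 / ((68 / 10) * delta ^ 2))).
Proof.
  intros. rewrite <- lsum_const. apply lsum_le. intros. apply fejer_sum_separated_le; auto.
Qed.

End Separated.

Lemma fejer_double_sum_le_trivial N X :
  lsum X (fun x => lsum X (fun x' => fejer N (2 * PI * (x - x')))) <=
  INR (length X) * (INR (length X) * INR (S N) ^ 2).
Proof.
  rewrite <- lsum_const. apply lsum_le. intros.
  rewrite <- lsum_const. apply lsum_le. intros. apply fejer_le_sq.
Qed.

Definition kronecker (a b : nat) : R := if Nat.eq_dec a b then 1 else 0.

Lemma kronecker_sym a b : kronecker a b = kronecker b a.
Proof. unfold kronecker; do 2 destruct Nat.eq_dec; auto; congruence. Qed.

Lemma rsum_kronecker n j0 g : (j0 < n)%nat -> rsum n (fun j => kronecker j0 j * g j) = g j0.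
Proof.
  intros Hj0. rewrite (rsum_single n j0); auto.
  - unfold kronecker; destruct Nat.eq_dec; [ring | congruence].
  - intros; unfold kronecker; destruct Nat.eq_dec; [congruence | ring].
Qed.

Section Grouping.
Variables (n M : nat) (c : nat -> R) (jdx : nat -> nat).
Hypothesis Hjdx : forall i, (i < n)%nat -> (jdx i < M)%nat.

Definition freq_mass (j : nat) : R := rsum n (fun i => c i * kronecker (jdx i) j).

Lemma rsum_group g : rsum n (fun i => c i * g (jdx i)) = rsum M (fun j => freq_mass j * g j).
Proof.
  unfold freq_mass.
  rewrite (rsum_ext M _ (fun j => rsum n (fun i => c i * kronecker (jdx i) j * g j)))
    by (intros; rewrite <- rsum_scal_r; auto).
  rewrite <- rsum_swap. apply rsum_ext; intros i Hi.
  rewrite (rsum_ext M _ (fun j => c i * (kronecker (jdx i) j * g j))) by (intros; ring).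
  rewrite rsum_scal, rsum_kronecker; auto.
Qed.

Lemma rsum_freq_mass_sq : rsum M (fun j => freq_mass j ^ 2) =
  rsum n (fun i => rsum n (fun i' => c i * c i' * kronecker (jdx i) (jdx i'))).
Proof.
  rewrite (rsum_ext M _ (fun j => rsum n (fun i => rsum n (fun i' =>
             c i * kronecker (jdx i) j * (c i' * kronecker (jdx i') j))))).
  2:{ intros. unfold freq_mass. rewrite <- Rsqr_pow2. apply rsum_sq. }
  rewrite rsum_swap. apply rsum_ext; intros i Hi.
  rewrite rsum_swap. apply rsum_ext; intros i' Hi'.
  rewrite (rsum_ext M _ (fun j => kronecker (jdx i) j * (c i * c i' * kronecker (jdx i') j)))
    by (intros; ring).
  rewrite rsum_kronecker by auto. rewrite kronecker_sym; auto.
Qed.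

Lemma freq_mass_empty j : (forall i, (i < n)%nat -> jdx i <> j) -> freq_mass j = 0.
Proof.
  intros Hj. unfold freq_mass.
  rewrite (rsum_ext n _ (fun _ => 0)), rsum_const; [ring|].
  intros i Hi. unfold kronecker. destruct Nat.eq_dec; [exfalso; apply (Hj i); auto | ring].
Qed.

End Grouping.

Lemma derivable_pt_lim_rsum n (f f' : nat -> R -> R) t :
  (forall i, derivable_pt_lim (f i) t (f' i t)) ->
  derivable_pt_lim (fun t => rsum n (fun i => f i t)) t (rsum n (fun i => f' i t)).
Proof.
  intros Hf. induction n as [|n IH].
  - exact (derivable_pt_lim_const 0 t).
  - exact (derivable_pt_lim_plus _ (f n) t _ _ IH (Hf n)).
Qed.

Lemma continuity_rsum n (f : nat -> R -> R) :
  (forall i, continuity (f i)) -> continuity (fun t => rsum n (fun i => f i t)).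
Proof.
  intros Hf t. induction n as [|n IH].
  - apply continuity_pt_const. intros u v; reflexivity.
  - exact (continuity_pt_plus _ (f n) t IH (Hf n t)).
Qed.

Lemma derivable_pt_lim_sin_lin a t : derivable_pt_lim (fun t => sin (a * t)) t (cos (a * t) * a).
Proof.
  apply (derivable_pt_lim_comp (fun t => a * t) sin).
  - pose proof (derivable_pt_lim_scal id a t 1 (derivable_pt_lim_id t)) as Hlin.
    rewrite Rmult_1_r in Hlin. exact Hlin.
  - apply derivable_pt_lim_sin.
Qed.

Lemma continuity_cos_lin k a : continuity (fun t => k * cos (a * t)).
Proof.
  intros t. apply (continuity_pt_scal (fun t => cos (a * t))).
  apply (continuity_pt_comp (fun t => a * t) cos).
  - apply (continuity_pt_scal id), derivable_continuous_pt, derivable_pt_id.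
  - apply continuity_cos.
Qed.

Lemma RiemannInt_antiderivative (F f : R -> R) a b (pr : Riemann_integrable f a b) :
  a <= b -> (forall t, derivable_pt_lim F t (f t)) -> continuity f ->
  RiemannInt pr = F b - F a.
Proof.
  intros Hab HF Hf.
  set (dF := (fun t => exist _ (f t) (HF t)) : derivable F).
  assert (Hder : derive F dF = f).
  { apply functional_extensionality; intros t. apply derive_pt_eq_0, HF. }
  assert (Hcont : continuity (derive F dF)) by (rewrite Hder; exact Hf).
  set (FC := mkC1 Hcont).
  assert (pr' : Riemann_integrable (derive FC (diff0 FC)) a b) by (simpl; rewrite Hder; exact pr).
  rewrite (RiemannInt_P18 pr pr') by (try lra; intros; simpl; rewrite Hder; auto).
  apply FTC_Riemann.
Qed.

Definition cos_antiderivative (m : Z) (t : R) : R :=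
  if Z.eq_dec m 0 then t else / (2 * PI * IZR m) * sin (2 * PI * IZR m * t).

Lemma derivable_cos_antiderivative m t :
  derivable_pt_lim (cos_antiderivative m) t (cos (2 * PI * IZR m * t)).
Proof.
  unfold cos_antiderivative. destruct (Z.eq_dec m 0) as [->|Hm].
  - replace (cos (2 * PI * IZR 0 * t)) with 1 by (rewrite Rmult_0_r, Rmult_0_l, cos_0; auto).
    apply derivable_pt_lim_id.
  - replace (cos (2 * PI * IZR m * t))
      with (/ (2 * PI * IZR m) * (cos (2 * PI * IZR m * t) * (2 * PI * IZR m))) by (field; split; [apply not_0_IZR; auto | pose proof PI_RGT_0; lra]).
    apply (derivable_pt_lim_scal (fun t => sin (2 * PI * IZR m * t))), derivable_pt_lim_sin_lin.
Qed.

Lemma cos_antiderivative_increment m :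
  cos_antiderivative m 1 - cos_antiderivative m 0 = if Z.eq_dec m 0 then 1 else 0.
Proof.
  unfold cos_antiderivative. destruct (Z.eq_dec m 0); [ring|].
  rewrite Rmult_1_r, Rmult_0_r, sin_0, sin_eq_0_1 by (exists (2 * m)%Z; rewrite mult_IZR; simpl; ring).
  ring.
Qed.

Lemma Cmod_fstar_sq n a y t : Cmod (fstar n a y t) ^ 2 =
  rsum n (fun i => rsum n (fun i' =>
    Cmod (a i) * Cmod (a i') * cos (2 * PI * IZR (y i - y i') * t))).
Proof.
  rewrite Cmod_sq. unfold fstar. rewrite fst_Csum_nat, snd_Csum_nat. cbn [fst snd RtoC Cmult e].
  rewrite <- !Rsqr_pow2. unfold Rsqr. rewrite !rsum_sq, <- rsum_plus.
  apply rsum_ext; intros i _. rewrite <- rsum_plus. apply rsum_ext; intros i' _.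
  rewrite minus_IZR.
  replace (2 * PI * (IZR (y i) - IZR (y i')) * t)
    with (2 * PI * (t * IZR (y i)) - 2 * PI * (t * IZR (y i'))) by ring.
  rewrite cos_minus. ring.
Qed.

Lemma RiemannInt_fstar_sq n a y (pr : Riemann_integrable (fun t => Cmod (fstar n a y t) ^ 2) 0 1) :
  RiemannInt pr = rsum n (fun i => rsum n (fun i' =>
    Cmod (a i) * Cmod (a i') * (if Z.eq_dec (y i - y i') 0 then 1 else 0))).
Proof.
  set (F := fun t => rsum n (fun i => rsum n (fun i' =>
              Cmod (a i) * Cmod (a i') * cos_antiderivative (y i - y i') t))).
  rewrite (RiemannInt_antiderivative F); [| lra | |].
  - unfold F. rewrite <- rsum_minus. apply rsum_ext; intros i _.
    rewrite <- rsum_minus. apply rsum_ext; intros i' _.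
    rewrite <- cos_antiderivative_increment. ring.
  - intros t. rewrite Cmod_fstar_sq. unfold F.
    apply (derivable_pt_lim_rsum n
      (fun i t => rsum n (fun i' => Cmod (a i) * Cmod (a i') * cos_antiderivative (y i - y i') t))
      (fun i t => rsum n (fun i' => Cmod (a i) * Cmod (a i') * cos (2 * PI * IZR (y i - y i') * t))));
      intros i.
    apply (derivable_pt_lim_rsum n
      (fun i' t => Cmod (a i) * Cmod (a i') * cos_antiderivative (y i - y i') t)
      (fun i' t => Cmod (a i) * Cmod (a i') * cos (2 * PI * IZR (y i - y i') * t))); intros i'.
    apply (derivable_pt_lim_scal (cos_antiderivative (y i - y i'))), derivable_cos_antiderivative.
  - rewrite (functional_extensionality _ _ (Cmod_fstar_sq n a y)).
    apply continuity_rsum; intros i. apply continuity_rsum; intros i'.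
    apply continuity_cos_lin.
Qed.

Lemma RiemannInt_nonneg (f : R -> R) a b (pr : Riemann_integrable f a b) :
  a <= b -> (forall t, a < t < b -> 0 <= f t) -> 0 <= RiemannInt pr.
Proof.
  intros Hab Hf.
  rewrite <- (Rmult_0_l (b - a)), <- (RiemannInt_P15 (RiemannInt_P14 a b 0)).
  apply RiemannInt_P19; auto.
Qed.

(** Fix [N >= K >= |y_i|] and shift the frequencies to
    [j = y_i + N] in [[0, 2N]].  Grouping [|a_i|] by frequency gives masses
    [b_j] with [sum_j b_j^2 = int_0^1 |f^*|^2] (Parseval), and Cauchy–Schwarz
    with the Fejér weights [w_j = N + 1 - |j - N|] (which are [>= N + 1 - K]
    on occupied frequencies) yields
    [|sum_x f(x)|^2 <= int |f^*|^2 / (N + 1 - K) * sum_{x, x'} F_N(2 pi (x - x'))]. *)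
Section LargeSieve.
Variables (X : list R) (n : nat) (a : nat -> Cx) (y : nat -> Z) (K N : nat).
Hypothesis HyK : forall i, (i < n)%nat -> (Z.abs (y i) <= Z.of_nat K)%Z.
Hypothesis HKN : (K <= N)%nat.

Definition freq_index (i : nat) : nat := Z.to_nat (y i + Z.of_nat N).

Definition fejer_weight (j : nat) : R := INR (S N) - Rabs (INR j - INR N).

Lemma freq_index_spec i : (i < n)%nat ->
  Z.of_nat (freq_index i) = (y i + Z.of_nat N)%Z /\ (freq_index i < 2 * N + 1)%nat.
Proof. intros Hi. specialize (HyK i Hi). unfold freq_index. split; [apply Z2Nat.id|]; lia. Qed.

Lemma fejer_weight_pos j : (j < 2 * N + 1)%nat -> 0 < fejer_weight j.
Proof.
  intros Hj. unfold fejer_weight. rewrite S_INR.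
  assert (INR j <= 2 * INR N) by (rewrite <- (mult_INR 2); apply le_INR; lia).
  pose proof (pos_INR j). assert (Rabs (INR j - INR N) <= INR N) by (apply Rabs_le; lra). lra.
Qed.

Lemma fejer_weight_at_freq i : (i < n)%nat -> INR (S N) - INR K <= fejer_weight (freq_index i).
Proof.
  intros Hi. unfold fejer_weight. destruct (freq_index_spec i Hi) as [Hj _].
  replace (INR (freq_index i) - INR N) with (IZR (y i))
    by (rewrite !INR_IZR_INZ, Hj, plus_IZR; ring).
  assert (Rabs (IZR (y i)) <= INR K)
    by (rewrite <- abs_IZR, INR_IZR_INZ; apply IZR_le, HyK, Hi).
  lra.
Qed.

Let mass := freq_mass n (fun i => Cmod (a i)) freq_index.

Lemma freq_mass_sq_sum (pr : Riemann_integrable (fun t => Cmod (fstar n a y t) ^ 2) 0 1) :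
  rsum (2 * N + 1) (fun j => mass j ^ 2) = RiemannInt pr.
Proof.
  unfold mass. rewrite rsum_freq_mass_sq by (intros; apply freq_index_spec; auto).
  rewrite RiemannInt_fstar_sq. apply rsum_ext; intros i Hi. apply rsum_ext; intros i' Hi'.
  f_equal. unfold kronecker.
  destruct (freq_index_spec i Hi) as [Ei _], (freq_index_spec i' Hi') as [Ei' _].
  destruct (Nat.eq_dec (freq_index i) (freq_index i')) as [Heq|Hne];
    destruct (Z.eq_dec (y i - y i') 0) as [Hz|Hz]; auto; exfalso.
  - apply Hz. rewrite Heq in Ei. lia.
  - apply Hne, Nat2Z.inj. lia.
Qed.

Lemma freq_mass_weighted_le :
  rsum (2 * N + 1) (fun j => mass j ^ 2 / fejer_weight j) <=
  rsum (2 * N + 1) (fun j => mass j ^ 2) / (INR (S N) - INR K).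
Proof.
  assert (HNK : 0 < INR (S N) - INR K) by (rewrite S_INR; apply le_INR in HKN; lra).
  unfold Rdiv. rewrite <- rsum_scal_r. apply rsum_le. intros j Hj.
  destruct (classic (exists i, (i < n)%nat /\ freq_index i = j)) as [[i [Hi <-]]|Hempty].
  - apply Rmult_le_compat_l; [apply pow2_ge_0|].
    apply Rinv_le_contravar, fejer_weight_at_freq; auto.
  - unfold mass. rewrite freq_mass_empty; [simpl; lra|].
    intros i Hi Heq. apply Hempty. exists i; auto.
Qed.

Lemma sum_trig_poly_sq_le (pr : Riemann_integrable (fun t => Cmod (fstar n a y t) ^ 2) 0 1) :
  Cmod (Csum_list X (fsum n a y)) ^ 2 <=
  RiemannInt pr / (INR (S N) - INR K) *
  lsum X (fun x => lsum X (fun x' => fejer N (2 * PI * (x - x')))).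
Proof.
  set (sigma := fun j => Cmod (expsum X (Z.of_nat j - Z.of_nat N))).
  assert (Hexp : Cmod (Csum_list X (fsum n a y)) <=
                 rsum (2 * N + 1) (fun j => mass j * sigma j)).
  { eapply Rle_trans; [apply Cmod_sum_trig_poly_le|]. unfold mass.
    rewrite <- rsum_group by (intros; apply freq_index_spec; auto).
    right. apply rsum_ext; intros i Hi. unfold sigma.
    destruct (freq_index_spec i Hi) as [E _]. rewrite E. do 3 f_equal. ring. }
  assert (Hcs := rsum_weighted_cauchy_schwarz (2 * N + 1) mass sigma fejer_weight fejer_weight_pos).
  assert (Hmoment : rsum (2 * N + 1) (fun j => fejer_weight j * sigma j ^ 2) =
                    lsum X (fun x => lsum X (fun x' => fejer N (2 * PI * (x - x')))))
    by apply fejer_weighted_expsum.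
  assert (Hmoment_nonneg : 0 <= rsum (2 * N + 1) (fun j => fejer_weight j * sigma j ^ 2)).
  { apply rsum_nonneg. intros j Hj.
    apply Rmult_le_pos; [left; apply fejer_weight_pos; auto | apply pow2_ge_0]. }
  rewrite <- Hmoment, <- (freq_mass_sq_sum pr).
  apply Rle_trans with (rsum (2 * N + 1) (fun j => mass j * sigma j) ^ 2).
  { apply pow_incr. split; [apply Cmod_nonneg | exact Hexp]. }
  eapply Rle_trans; [exact Hcs|]. apply Rmult_le_compat_r; auto. apply freq_mass_weighted_le.
Qed.

End LargeSieve.

Lemma nat_floor_exists T : 0 <= T -> exists K : nat, INR K <= T < INR K + 1.
Proof.
  intros HT. destruct (archimed T) as [Hup1 Hup2].
  assert (Hup : (0 < up T)%Z) by (apply lt_IZR; simpl; lra).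
  exists (Z.to_nat (up T - 1)). rewrite INR_IZR_INZ, Z2Nat.id, minus_IZR by lia. simpl. lra.
Qed.

Lemma Zabs_le_of_Rabs_le (z : Z) T K : Rabs (IZR z) <= T -> T < INR K + 1 -> (Z.abs z <= Z.of_nat K)%Z.
Proof.
  intros Hz HK. rewrite <- abs_IZR in Hz.
  assert (Hlt : IZR (Z.abs z) < IZR (Z.of_nat K + 1))
    by (rewrite plus_IZR, <- INR_IZR_INZ; simpl; lra).
  apply lt_IZR in Hlt. lia.
Qed.

Lemma separated_card_le delta P X : 0 < delta -> separated delta X ->
  (forall x, In x X -> -P <= x <= P) -> (2 <= length X)%nat -> INR (length X) * delta <= 4 * P.
Proof.
  intros Hd Hsep HX Hlen. destruct X as [|x0 X']; [simpl in Hlen; lia|].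
  pose proof (separated_length_le delta (length X') (x0 :: X') (-P) P eq_refl Hsep HX).
  assert (1 <= INR (length X')) by (apply (le_INR 1); simpl in Hlen; lia).
  simpl length. rewrite S_INR. nra.
Qed.

(** Choice of the Fejér cut-off: for [K >= 1] and an integer
    [m in (3v/2, 3v/2 + 1]], the length [L = K + m] satisfies
    [(K + L)^2 + (16 / 6.8) v^2 <= 4.93 L (K + v)]. *)
Lemma fejer_cutoff_choice K m v : 1 <= K -> 0 < v -> 3 / 2 * v < m <= 3 / 2 * v + 1 ->
  (K + (K + m)) ^ 2 + 16 / (68 / 10) * v ^ 2 <= 493 / 100 * (K + m) * (K + v).
Proof. intros. nra. Qed.

Lemma le_of_sq_le_PI_sqrt z A B C : 0 <= z -> 0 <= A -> 0 <= B -> 0 <= C ->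
  z ^ 2 <= PI ^ 2 * A * B * C -> z <= PI * sqrt A * sqrt B * sqrt C.
Proof.
  intros Hz HA HB HC H. pose proof PI_RGT_0 as HPI.
  rewrite <- (sqrt_pow2 z Hz), <- (sqrt_pow2 PI) by lra.
  assert (H1 : 0 <= PI ^ 2) by apply pow2_ge_0.
  assert (H2 : 0 <= PI ^ 2 * A) by (apply Rmult_le_pos; auto).
  assert (H3 : 0 <= PI ^ 2 * A * B) by (apply Rmult_le_pos; auto).
  rewrite <- (sqrt_mult _ _ H1 HA), <- (sqrt_mult _ _ H2 HB), <- (sqrt_mult _ _ H3 HC).
  apply sqrt_le_1_alt, H.
Qed.

(** The squared form of the theorem, in the two regimes: all frequencies zero
    (no cut-off needed) and maximal frequency [K >= 1] (Fejér cut-off at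
    [N + 1 = 2K + m] with [m ~ 3 / (2 delta)]). *)
Section SquaredBound.
Variables (delta P T : R) (X : list R) (n : nat) (a : nat -> Cx) (y : nat -> Z).
Variable pr : Riemann_integrable (fun t => Cmod (fstar n a y t) ^ 2) 0 1.
Hypothesis Hdelta : 0 < delta.
Hypothesis HP : 0 < P.
Hypothesis HT : 0 <= T.
Hypothesis Hsep : separated delta X.
Hypothesis HXP : forall x, In x X -> -P <= x <= P.
Hypothesis Hcard : INR (length X) * delta <= 4 * P.

Lemma squared_bound_zero_freq : (forall i, (i < n)%nat -> (Z.abs (y i) <= 0)%Z) ->
  Cmod (Csum_list X (fsum n a y)) ^ 2 <=
  PI ^ 2 * (INR (length X) * T + INR (length X) / delta) * (P + 2) * RiemannInt pr.
Proof.
  intros Hy0.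
  assert (Hsieve := sum_trig_poly_sq_le X n a y 0 0 Hy0 (le_n 0) pr).
  assert (Hphi := fejer_double_sum_le_trivial 0 X).
  assert (HI : 0 <= RiemannInt pr) by (apply RiemannInt_nonneg; [lra | intros; apply pow2_ge_0]).
  set (NX := INR (length X)) in *. set (I := RiemannInt pr) in *.
  replace (INR (S 0) - INR 0) with 1 in Hsieve by (simpl; ring).
  replace (INR (S 0) ^ 2) with 1 in Hphi by (simpl; ring).
  assert (HNX : 0 <= NX) by apply pos_INR.
  assert (Hcount : NX <= PI ^ 2 * (P + 2) / delta).
  { pose proof PI_bounds. assert (PI ^ 2 >= 9) by nra.
    assert (9 * (P + 2) <= PI ^ 2 * (P + 2)) by (apply Rmult_le_compat_r; lra).
    apply (Rmult_le_reg_r delta); auto.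
    replace (PI ^ 2 * (P + 2) / delta * delta) with (PI ^ 2 * (P + 2)) by (field; lra). lra. }
  assert (Hmain : NX * NX <= PI ^ 2 * (NX * T + NX / delta) * (P + 2)).
  { assert (0 <= PI ^ 2 * (P + 2) * (NX * T))
      by (apply Rmult_le_pos; [apply Rmult_le_pos; [apply pow2_ge_0 | lra] | apply Rmult_le_pos; lra]).
    assert (NX * NX <= NX * (PI ^ 2 * (P + 2) / delta)) by (apply Rmult_le_compat_l; auto).
    unfold Rdiv in *. nra. }
  eapply Rle_trans; [exact Hsieve|].
  replace (I / 1) with I by field. rewrite (Rmult_comm _ I).
  apply Rmult_le_compat_l; [exact HI | lra].
Qed.

Lemma squared_bound_cutoff K : (1 <= K)%nat -> INR K <= T ->
  (forall i, (i < n)%nat -> (Z.abs (y i) <= Z.of_nat K)%Z) ->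
  Cmod (Csum_list X (fsum n a y)) ^ 2 <=
  PI ^ 2 * (INR (length X) * T + INR (length X) / delta) * (P + 2) * RiemannInt pr.
Proof.
  intros HK1 HKT HyK.
  set (v := / delta). assert (Hv : 0 < v) by (apply Rinv_0_lt_compat; auto).
  destruct (nat_floor_exists (3 / 2 * v)) as [m0 Hm0]; [lra|].
  set (N := (2 * K + m0)%nat).
  assert (HL : INR (S N) - INR K = INR K + (INR m0 + 1))
    by (unfold N; rewrite S_INR, plus_INR, mult_INR; simpl; ring).
  assert (Hsieve := sum_trig_poly_sq_le X n a y K N HyK ltac:(unfold N; lia) pr).
  assert (Hphi := fejer_double_sum_le delta Hdelta P N X HP Hsep HXP).
  assert (Hcut := fejer_cutoff_choice (INR K) (INR m0 + 1) v
                    ltac:(apply (le_INR 1); auto) Hv ltac:(lra)).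
  assert (HI : 0 <= RiemannInt pr) by (apply RiemannInt_nonneg; [lra | intros; apply pow2_ge_0]).
  rewrite HL in Hsieve.
  replace (INR (S N)) with (INR K + (INR K + (INR m0 + 1))) in Hphi by (rewrite <- HL; ring).
  replace (16 / ((68 / 10) * delta ^ 2)) with (16 / (68 / 10) * v ^ 2) in Hphi by (unfold v; field; lra).
  replace (INR (length X) / delta) with (INR (length X) * v) by reflexivity.
  set (NX := INR (length X)) in *. set (I := RiemannInt pr) in *.
  set (L := INR K + (INR m0 + 1)) in *.
  set (Phi := lsum X (fun x => lsum X (fun x' => fejer N (2 * PI * (x - x'))))) in *.
  assert (HL0 : 0 < L) by (pose proof (pos_INR K); pose proof (pos_INR m0); unfold L; lra).
  assert (HNX : 0 <= NX) by apply pos_INR.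
  assert (Hphi' : Phi <= L * (NX * (2 * P + 2) * (493 / 100) * (INR K + v))).
  { eapply Rle_trans; [exact Hphi|].
    assert (0 <= NX * (2 * P + 2)) by nra.
    replace (L * (NX * (2 * P + 2) * (493 / 100) * (INR K + v)))
      with (NX * (2 * P + 2) * (493 / 100 * L * (INR K + v))) by ring.
    rewrite <- Rmult_assoc. apply Rmult_le_compat_l; auto. }
  assert (Hconst : NX * (2 * P + 2) * (493 / 100) * (INR K + v) <=
                   PI ^ 2 * (NX * T + NX * v) * (P + 2)).
  { pose proof PI_bounds. assert (PI ^ 2 >= 9.869) by nra.
    assert ((2 * P + 2) * (493 / 100) <= PI ^ 2 * (P + 2)) by nra.
    replace (PI ^ 2 * (NX * T + NX * v) * (P + 2)) with (NX * (T + v) * (PI ^ 2 * (P + 2))) by ring.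
    replace (NX * (2 * P + 2) * (493 / 100) * (INR K + v))
      with (NX * (INR K + v) * ((2 * P + 2) * (493 / 100))) by ring.
    pose proof (pos_INR K).
    apply Rmult_le_compat; [apply Rmult_le_pos | | apply Rmult_le_compat_l |]; lra. }
  eapply Rle_trans; [exact Hsieve|].
  replace (I / L * Phi) with (I * (Phi / L)) by (field; lra).
  replace (PI ^ 2 * (NX * T + NX * v) * (P + 2) * I)
    with (I * (PI ^ 2 * (NX * T + NX * v) * (P + 2))) by ring.
  apply Rmult_le_compat_l; auto.
  apply (Rmult_le_reg_r L); auto. unfold Rdiv. rewrite Rmult_assoc, Rinv_l by lra. nra.
Qed.

End SquaredBound.

Theorem lemma1 (delta P T : R) (X : list R) (n : nat) (a : nat -> Cx) (y : nat -> Z)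
  (Hdelta : 0 < delta) (HP : 0 < P)
  (HX : delta_spaced delta X)
  (HXP : forall x, In x X -> -P <= x <= P)
  (HT : 0 <= T)
  (Hy : forall i, (i < n)%nat -> Rabs (IZR (y i)) <= T)
  (pr : Riemann_integrable (fun t => Cmod (fstar n a y t) ^ 2) 0 1) :
  Cmod (Csum_list X (fsum n a y)) <=
    PI * sqrt (INR (length X) * T + INR (length X) / delta)
       * sqrt (P + 2) * sqrt (RiemannInt pr).
Proof.
  destruct HX as [Hnd [Hlen Hspc]].
  assert (Hsep : separated delta X) by (split; auto).
  assert (Hcard := separated_card_le delta P X Hdelta Hsep HXP Hlen).
  destruct (nat_floor_exists T HT) as [K [HKT HTK]].
  assert (HyK : forall i, (i < n)%nat -> (Z.abs (y i) <= Z.of_nat K)%Z)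
    by (intros; eapply Zabs_le_of_Rabs_le; eauto).
  apply le_of_sq_le_PI_sqrt.
  - apply Cmod_nonneg.
  - pose proof (pos_INR (length X)). assert (0 < / delta) by (apply Rinv_0_lt_compat; auto).
    unfold Rdiv. nra.
  - lra.
  - apply RiemannInt_nonneg; [lra | intros; apply pow2_ge_0].
  - destruct K as [|K].
    + apply squared_bound_zero_freq; auto.
    + apply squared_bound_cutoff with (K := S K); auto; lia.
Qed.
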